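(* Let $X,Y$ be real Hilbert spaces, $f:X\to\mathbb{R}$ convex and continuously differentiable, $A:X\to Y$ linear and continuous, $b\in Y$, and assume $S\times M\neq\emptyset$. Let $\varepsilon:[t_{0},+\infty[\ \to\ ]0,+\infty[$ be continuously differentiable with $\lim_{t\to+\infty}\varepsilon(t)=0$, and for each $t\geq t_0$ let $(x_t,\lambda_t)$ be the unique saddle point of $L_t$. Suppose that there exists $\alpha>0$ such that $\|T(x,\lambda)-T(\xi,\eta)\|^{2}\geq\alpha\|(x,\lambda)-(\xi,\eta)\|^{2}$ for all $(x,\lambda),(\xi,\eta)\in X\times Y$. Then, for $(\bar x,\bar\lambda)\in S\times M$, as $t\to+\infty$: \[ \|(x_t,\lambda_t)\|^2=\mathcal{O}\Big(\frac{1}{\alpha+\varepsilon^2(t)}\Big),\qquad \|(x_t,\lambda_t)-(\bar x,\bar\lambda)\|^2=\mathcal{O}\Big(\frac{\varepsilon^2(t)}{\alpha+\varepsilon^2(t)}\Big),\qquad \|(\dot x_t,\dot\lambda_t)\|^2=\mathcal{O}\bigg(\frac{|\dot\varepsilon(t)|^2}{(\alpha+\varepsilon^2(t))^2}\bigg), \] the last estimate holding along the (almost every) $t$ at which $t\mapsto(x_t,\lambda_t)$ is differentiable.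
   Context: $X\times Y$ carries the product inner product $\langle(x,\lambda),(\xi,\eta)\rangle=\langle x,\xi\rangle_X+\langle \lambda,\eta\rangle_Y$ and associated norm $\|\cdot\|$. The Lagrangian is $L(x,\lambda)=f(x)+\langle\lambda,Ax-b\rangle_Y$. $S$ is the set of optimal solutions of $\min\{f(x):Ax=b\}$ and $M\subset Y$ the set of associated Lagrange multipliers; $S\times M$ is exactly the set of saddle points of $L$, equivalently the zero set of the monotone operator $T:X\times Y\to X\times Y$, $T(x,\lambda)=(\nabla f(x)+A^*\lambda,\ b-Ax)$. For $t\ge t_0$, $L_t(x,\lambda)=L(x,\lambda)+\frac{\varepsilon(t)}{2}(\|x\|_X^2-\|\lambda\|_Y^2)$ has a unique saddle point $(x_t,\lambda_t)$, characterized by $T(x_t,\lambda_t)+\varepsilon(t)(x_t,\lambda_t)=0$. The map $t\mapsto(x_t,\lambda_t)$ is Lipschitz on compact intervals, hence differentiable a.e.; $(\dot x_t,\dot\lambda_t)$ denotes its derivative. *)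

From mathcomp Require Import all_boot all_order all_algebra.
From mathcomp Require Import all_classical all_reals all_analysis.
Set Implicit Arguments. Unset Strict Implicit. Unset Printing Implicit Defensive.
Import Order.TTheory GRing.Theory Num.Theory.
Import numFieldNormedType.Exports.
Local Open Scope classical_set_scope.
Local Open Scope ring_scope.

(* A real inner product on a normed module V whose induced norm is the norm
   of V.  A real Hilbert space is then a completeNormedModType R together with
   such an inner product. *)
Record inner_product (R : realType) (V : normedModType R) := InnerProduct {
  ip :> V -> V -> R;
  ip_sym : forall x y, ip x y = ip y x;
  ip_linl : forall (a : R) (x y z : V), ip (a *: x + y) z = a * ip x z + ip y z;
  ip_norm : forall x, ip x x = `|x| ^+ 2
}.

Definition convex_fun (R : realType) (X : normedModType R) (f : X -> R) :=
  forall (x y : X) (s : R), 0 <= s <= 1 ->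
    f ((1 - s) *: x + s *: y) <= (1 - s) * f x + s * f y.

Definition is_gradient (R : realType) (X : normedModType R)
  (ipX : inner_product X) (f : X -> R) (gradf : X -> X) :=
  forall x, differentiable f x /\ forall h, ('d f x : X -> R) h = ipX (gradf x) h.

Definition is_adjoint (R : realType) (X Y : normedModType R)
  (ipX : inner_product X) (ipY : inner_product Y) (A : X -> Y) (Astar : Y -> X) :=
  forall x l, ipX x (Astar l) = ipY (A x) l.

Definition prod_sqnorm (R : realType) (X Y : normedModType R) (x : X) (l : Y) : R :=
  `|x| ^+ 2 + `|l| ^+ 2.

Definition lagrangian (R : realType) (X Y : normedModType R)
  (ipY : inner_product Y) (f : X -> R) (A : X -> Y) (b : Y) (x : X) (l : Y) : R :=
  f x + ipY l (A x - b).

Definition reg_lagrangian (R : realType) (X Y : normedModType R)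
  (ipY : inner_product Y) (f : X -> R) (A : X -> Y) (b : Y) (e : R) (x : X) (l : Y) : R :=
  lagrangian ipY f A b x l + e / 2 * (`|x| ^+ 2 - `|l| ^+ 2).

Definition saddle_point (R : realType) (X Y : normedModType R)
  (Lag : X -> Y -> R) (xs : X) (ls : Y) :=
  forall x l, Lag xs l <= Lag xs ls /\ Lag xs ls <= Lag x ls.

Definition opt_sol (R : realType) (X Y : normedModType R)
  (f : X -> R) (A : X -> Y) (b : Y) : set X :=
  [set x | A x = b /\ forall y, A y = b -> f x <= f y].

Definition multipliers (R : realType) (X Y : normedModType R)
  (f : X -> R) (gradf : X -> X) (A : X -> Y) (Astar : Y -> X) (b : Y) : set Y :=
  [set l | forall x, opt_sol f A b x -> gradf x + Astar l = 0].

(* The saddle point z_t = (x_t, l_t) of L_t is the zero of T + eps(t) Id, and a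
   primal-dual solution zbar is a zero of T.  For zeros z1, z2 of T + e1 Id and
   T + e2 Id, the expansiveness of T gives
     alpha |z1 - z2|^2 <= |T z1 - T z2|^2 = |e1 (z1 - z2) + (e1 - e2) z2|^2
                       <= 2 e1^2 |z1 - z2|^2 + 2 (e1 - e2)^2 |z2|^2,
   so |z1 - z2|^2 <= 4 (e1 - e2)^2 |z2|^2 / alpha once 4 e1^2 <= alpha, which
   holds eventually since eps -> 0.  With z2 = zbar this gives
   |z_t - zbar|^2 = O(eps^2) and the boundedness of z_t; with z1 = z_(t+h),
   z2 = z_t and h -> 0 it gives |z_t'|^2 = O(eps'^2).  Finally alpha + eps^2
   eventually lies in [alpha, alpha + 1], so these are the three stated rates. *)

From mathcomp Require Import all_boot all_order all_algebra.
From mathcomp Require Import all_classical all_reals all_analysis.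
From mathcomp Require Import ring lra.
Set Implicit Arguments. Unset Strict Implicit. Unset Printing Implicit Defensive.
Import Order.TTheory GRing.Theory Num.Theory.
Import numFieldNormedType.Exports.
Local Open Scope classical_set_scope.
Local Open Scope ring_scope.

Section SquaredNorm.
Variables (R : realType) (V : normedModType R).

Lemma sqnormZ a (u : V) : `|a *: u| ^+ 2 = a ^+ 2 * `|u| ^+ 2.
Proof. by rewrite normrZ exprMn real_normK ?num_real. Qed.

Lemma sqnormD_le (u v : V) : `|u + v| ^+ 2 <= 2 * `|u| ^+ 2 + 2 * `|v| ^+ 2.
Proof.
have uv_ge0 : 0 <= `|u| + `|v| by rewrite addr_ge0.
apply: le_trans (_ : (`|u| + `|v|) ^+ 2 <= _).
  by rewrite lerXn2r ?nnegrE ?ler_normD.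
by have := sqr_ge0 (`|u| - `|v|); rewrite !expr2; lra.
Qed.

Lemma sqnormB_shifted_zeros (T1 T2 u1 u2 : V) (e1 e2 : R) :
  T1 + e1 *: u1 = 0 -> T2 + e2 *: u2 = 0 ->
  `|T1 - T2| ^+ 2 <= 2 * (e1 ^+ 2 * `|u1 - u2| ^+ 2) + 2 * ((e1 - e2) ^+ 2 * `|u2| ^+ 2).
Proof.
move=> /eqP; rewrite addr_eq0 => /eqP -> /eqP; rewrite addr_eq0 => /eqP ->.
have -> : - (e1 *: u1) - - (e2 *: u2) = - (e1 *: (u1 - u2) + (e1 - e2) *: u2).
  by rewrite scalerBr scalerBl addrA subrK opprB opprK addrC.
by rewrite normrN -!sqnormZ sqnormD_le.
Qed.

End SquaredNorm.

Lemma prod_sqnorm_ge0 (R : realType) (X Y : normedModType R) (x : X) (l : Y) :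
  0 <= prod_sqnorm x l.
Proof. by rewrite addr_ge0 ?sqr_ge0. Qed.

Section InnerProductTheory.
Variables (R : realType) (V : normedModType R) (ip : inner_product V).

Lemma ipDl x y z : ip (x + y) z = ip x z + ip y z.
Proof. by have := ip_linl ip 1 x y z; rewrite scale1r mul1r. Qed.

Lemma ip0l z : ip 0 z = 0.
Proof. by have := ipDl 0 0 z; rewrite addr0; lra. Qed.

Lemma ipZl a x z : ip (a *: x) z = a * ip x z.
Proof. by have := ip_linl ip a x 0 z; rewrite addr0 ip0l addr0. Qed.

Lemma ipDr x y z : ip z (x + y) = ip z x + ip z y.
Proof. by rewrite ip_sym ipDl !(ip_sym ip _ z). Qed.

Lemma ipZr a x z : ip z (a *: x) = a * ip z x.
Proof. by rewrite ip_sym ipZl ip_sym. Qed.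

Lemma sqnormD_ip x y : `|x + y| ^+ 2 = `|x| ^+ 2 + 2 * ip x y + `|y| ^+ 2.
Proof. by rewrite -!(ip_norm ip) !(ipDl, ipDr) (ip_sym ip y x); ring. Qed.

Lemma ip_self_le0 x : ip x x <= 0 -> x = 0.
Proof.
rewrite (ip_norm ip) => x2_le0.
by apply/eqP; rewrite -normr_eq0 -sqrf_eq0 eq_le x2_le0 sqr_ge0.
Qed.

Lemma ip_ge0_eq0 g : (forall h, 0 <= ip g h) -> g = 0.
Proof.
move=> g_ge0; apply: ip_self_le0; rewrite -oppr_ge0.
by have := g_ge0 (- g); rewrite -scaleN1r ipZr mulN1r.
Qed.

Lemma ip_quadratic_argmax (w l : V) (e : R) : 0 < e ->
  (forall l', ip l' w - e / 2 * `|l'| ^+ 2 <= ip l w - e / 2 * `|l| ^+ 2) ->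
  w = e *: l.
Proof.
move=> e_gt0 l_max; apply/eqP; rewrite -subr_eq0; apply/eqP/ip_self_le0.
(* the objective at [w / e] exceeds its value at [l] by [`|w - e *: l| ^+ 2 / (2 e)] *)
have := l_max (e^-1 *: w).
rewrite (ip_norm ip) -[- (e *: l)]scaleNr sqnormD_ip ipZr ipZl (ip_sym ip w l).
rewrite !sqnormZ (ip_norm ip).
have es : e * e^-1 = 1 by rewrite mulfV ?gt_eqF.
move: (e^-1) es => s es /(ler_wpM2l (ltW e_gt0)).
have -> : e * (s * `|w| ^+ 2 - e / 2 * (s ^+ 2 * `|w| ^+ 2)) =
          (e * s) * `|w| ^+ 2 - (e * s) ^+ 2 * `|w| ^+ 2 / 2 by ring.
rewrite es; lra.
Qed.

End InnerProductTheory.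

Section RegularizedZero.
Variables (R : realType) (X Y : normedModType R).
Variables (gradf : X -> X) (A : X -> Y) (Astar : Y -> X) (b : Y).

Definition regularized_zero (e : R) (x : X) (l : Y) :=
  gradf x + Astar l + e *: x = 0 /\ b - A x + e *: l = 0.

Variable alpha : R.
Hypothesis T_expansive : forall (x xi : X) (l eta : Y),
  prod_sqnorm ((gradf x + Astar l) - (gradf xi + Astar eta)) ((b - A x) - (b - A xi))
    >= alpha * prod_sqnorm (x - xi) (l - eta).
Hypothesis alpha_gt0 : 0 < alpha.

Lemma regularized_zero_dist e1 e2 x1 x2 l1 l2 : 4 * e1 ^+ 2 <= alpha ->
  regularized_zero e1 x1 l1 -> regularized_zero e2 x2 l2 ->
  prod_sqnorm (x1 - x2) (l1 - l2) <= 4 * prod_sqnorm x2 l2 / alpha * (e1 - e2) ^+ 2.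
Proof.
move=> e1_small [zx1 zl1] [zx2 zl2].
rewrite mulrAC ler_pdivlMr //.
have := T_expansive x1 x2 l1 l2.
have := sqnormB_shifted_zeros zx1 zx2; have := sqnormB_shifted_zeros zl1 zl2.
have : 0 <= (alpha - 4 * e1 ^+ 2) * prod_sqnorm (x1 - x2) (l1 - l2).
  by rewrite mulr_ge0 ?subr_ge0 ?prod_sqnorm_ge0.
rewrite /prod_sqnorm; nra.
Qed.

End RegularizedZero.

Lemma ler_derive_right_quotient (R : realType) (V : normedModType R)
    (f : V -> R) (x h : V) (a c : R) :
  derivable f x h ->
  (forall s, 0 < s -> a - s * c <= s^-1 * (f (s *: h + x) - f x)) ->
  a <= 'D_h f x.
Proof.
move=> f_der quot_ge.
have lower_cvg : (fun s : R => a - s * c) @ 0^'+ --> a.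
  apply: cvg_at_right_filter.
  have : (fun s : R => a - s * c) @ 0 --> a - 0 * c.
    by apply: cvgB; [exact: cvg_cst | apply: cvgMl; exact: cvg_id].
  by rewrite mul0r subr0.
apply: (ler_cvg_to lower_cvg (cvg_dnbhs_at_right f_der)).
by near=> s; apply: quot_ge; near: s; exact: nbhs_right_gt.
Unshelve. all: by end_near.
Qed.

Lemma derivable1_quotient_cvg (R : realType) (V : normedModType R) (g : R -> V) t :
  derivable g t 1 -> h^-1 *: (g (h + t) - g t) @[h --> 0^'] --> derive1 g t.
Proof.
rewrite derive1E => g_der.
have -> : (fun h => h^-1 *: (g (h + t) - g t)) =
          (fun h => h^-1 *: ((g \o shift t) (h *: 1) - g t)).
  by apply/funext => h /=; rewrite [h *: 1]mulr1.
exact: g_der.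
Qed.

Lemma derive1_prod_sqnorm_le (R : realType) (X Y : normedModType R)
    (u : R -> X) (v : R -> Y) (e : R -> R) (t k : R) :
  derivable u t 1 -> derivable v t 1 -> derivable e t 1 ->
  (\forall h \near 0^',
     prod_sqnorm (u (h + t) - u t) (v (h + t) - v t) <= k * (e (h + t) - e t) ^+ 2) ->
  prod_sqnorm (derive1 u t) (derive1 v t) <= k * derive1 e t ^+ 2.
Proof.
move=> /derivable1_quotient_cvg du /derivable1_quotient_cvg dv
       /derivable1_quotient_cvg de incr_le.
have sqr_cvg (V : normedModType R) (q : R -> V) (l : V) :
    q @ 0^' --> l -> `|q h| ^+ 2 @[h --> 0^'] --> `|l| ^+ 2.
  by move=> /cvg_norm q_cvg; rewrite expr2; under eq_fun do rewrite expr2; exact: cvgM.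
apply: (ler_cvg_to (cvgD (sqr_cvg _ _ _ du) (sqr_cvg _ _ _ dv))).
  by rewrite -real_normK ?num_real //; apply: cvgMl_tmp; exact: sqr_cvg de.
near=> h; rewrite fctE !sqnormZ -mulrDr mulrCA real_normK ?num_real //.
by apply: ler_wpM2l; [exact: sqr_ge0 | near: h].
Unshelve. all: by end_near.
Qed.

Section SaddlePointOptimality.
Variables (R : realType) (X Y : normedModType R).
Variables (ipX : inner_product X) (ipY : inner_product Y).
Variables (f : X -> R) (gradf : X -> X) (A : {linear X -> Y}) (Astar : Y -> X) (b : Y).
Hypotheses (f_grad : is_gradient ipX f gradf) (A_adj : is_adjoint ipX ipY A Astar).

Lemma reg_lagrangian_argmin_x e x l :
  (forall x', reg_lagrangian ipY f A b e x l <= reg_lagrangian ipY f A b e x' l) ->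
  gradf x + Astar l + e *: x = 0.
Proof.
move=> x_min; apply: (ip_ge0_eq0 (ip := ipX)) => h.
have [fx_diff dfE] := f_grad x.
have gradE : ipX (Astar l + e *: x) h = ipY l (A h) + e * ipX h x.
  by rewrite ipDl ipZl (ip_sym ipX (Astar l)) A_adj (ip_sym ipY) (ip_sym ipX x).
have : - ipX (Astar l + e *: x) h <= 'D_h f x.
  apply: (@ler_derive_right_quotient _ _ _ _ _ _ (e / 2 * `|h| ^+ 2)).
    exact: diff_derivable.
  move=> s s_gt0; have := x_min (s *: h + x).
  have AsZ : A (s *: h) = s *: A h by exact: linearZ.
  rewrite /reg_lagrangian /lagrangian linearD AsZ !ipDr ipZr.
  rewrite (sqnormD_ip ipX) sqnormZ ipZl gradE.
  by rewrite ler_pdivlMl //; lra.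
by rewrite (deriveE h fx_diff) dfE !ipDl; lra.
Qed.

Lemma reg_lagrangian_argmax_l e x l : 0 < e ->
  (forall l', reg_lagrangian ipY f A b e x l' <= reg_lagrangian ipY f A b e x l) ->
  b - A x + e *: l = 0.
Proof.
move=> e_gt0 l_max.
suff Axb : A x - b = e *: l by rewrite -opprB Axb addNr.
apply: (ip_quadratic_argmax (ip := ipY) e_gt0) => l'.
by have := l_max l'; rewrite /reg_lagrangian /lagrangian !(ip_sym ipY _ (A x - b)); lra.
Qed.

Lemma saddle_point_regularized_zero e x l : 0 < e ->
  saddle_point (reg_lagrangian ipY f A b e) x l ->
  regularized_zero gradf A Astar b e x l.
Proof.
move=> e_gt0 saddle; split.
  by apply: reg_lagrangian_argmin_x => x'; exact: (saddle x' l).2.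
by apply: reg_lagrangian_argmax_l => // l'; exact: (saddle x l').1.
Qed.

Lemma opt_sol_regularized_zero x l : opt_sol f A b x ->
  multipliers f gradf A Astar b l -> regularized_zero gradf A Astar b 0 x l.
Proof.
move=> x_opt l_mult; rewrite /regularized_zero !scale0r !addr0.
by split; [exact: l_mult | rewrite x_opt.1 subrr].
Qed.

End SaddlePointOptimality.

Lemma ler_scale_ratio (R : realType) (P c d D : R) :
  0 <= P -> P <= c -> 0 < d -> d <= D -> P <= c * D / d.
Proof.
move=> P_ge0 Pc d_gt0 dD; rewrite ler_pdivlMr //.
by apply: le_trans (_ : c * d <= _); [rewrite ler_pM2r | rewrite ler_wpM2l //]; lra.
Qed.

Section NearPinfty.
Variable R : realType.

Lemma near_pinfty_ex_ge (P : R -> Prop) :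
  (\forall t \near +oo, P t) -> exists T, forall t, T <= t -> P t.
Proof. by move=> [M [_ MP]]; exists (M + 1) => t Mt; apply: MP; lra. Qed.

Lemma near_pinfty_shift (P : R -> Prop) :
  (\forall s \near +oo, P s) -> \forall t \near +oo, \forall h \near 0, P (h + t).
Proof.
move=> [M [M_real MP]]; exists (M + 1); split=> [|t Mt]; first exact: realD.
exists 1 => //= h; rewrite /ball_ /= sub0r normrN ltr_norml => /andP[h_gt _].
by apply: MP; lra.
Qed.

Lemma cvg0_sqr_le (u : R -> R) (c : R) :
  u @ +oo --> 0 -> 0 < c -> \forall t \near +oo, u t ^+ 2 <= c.
Proof.
move=> u_cvg c_gt0.
have m_gt0 : 0 < Num.min 1 c by rewrite lt_min ltr01.
apply: filterS (cvgr0_norm_le _ u_cvg _ m_gt0) => t.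
rewrite le_min => /andP[u_le1 u_lec].
by rewrite -real_normK ?num_real //; have := normr_ge0 (u t); nra.
Qed.

End NearPinfty.

Section RegularizedPath.
Variables (R : realType) (X Y : normedModType R).
Variables (gradf : X -> X) (A : X -> Y) (Astar : Y -> X) (b : Y) (alpha : R).
Hypothesis T_expansive : forall (x xi : X) (l eta : Y),
  prod_sqnorm ((gradf x + Astar l) - (gradf xi + Astar eta)) ((b - A x) - (b - A xi))
    >= alpha * prod_sqnorm (x - xi) (l - eta).
Hypothesis alpha_gt0 : 0 < alpha.
Variables (t0 : R) (eps : R -> R) (xt : R -> X) (lt : R -> Y) (xbar : X) (lbar : Y).
Hypothesis path_zero :
  forall t, t0 <= t -> regularized_zero gradf A Astar b (eps t) (xt t) (lt t).
Hypothesis bar_zero : regularized_zero gradf A Astar b 0 xbar lbar.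
Hypothesis eps_cvg0 : eps @ +oo --> 0.

Let eps_small : \forall t \near +oo, t0 <= t /\ 4 * eps t ^+ 2 <= alpha.
Proof.
have alpha4_gt0 : 0 < alpha / 4 by rewrite divr_gt0.
apply: filterS2 (nbhs_pinfty_ge (num_real t0)) (cvg0_sqr_le eps_cvg0 alpha4_gt0).
by move=> t t0t eps_t; split=> //; lra.
Qed.

Lemma path_dist_bar :
  exists K, \forall t \near +oo, prod_sqnorm (xt t - xbar) (lt t - lbar) <= K * eps t ^+ 2.
Proof.
exists (4 * prod_sqnorm xbar lbar / alpha).
apply: filterS eps_small => t [t0t eps_t].
have := regularized_zero_dist T_expansive alpha_gt0 eps_t (path_zero t0t) bar_zero.
by rewrite subr0.
Qed.

Lemma path_bounded : exists B, \forall t \near +oo, prod_sqnorm (xt t) (lt t) <= B.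
Proof.
have [K dist_bar] := path_dist_bar.
exists (2 * `|K| + 2 * prod_sqnorm xbar lbar).
apply: filterS2 dist_bar (cvg0_sqr_le eps_cvg0 ltr01) => t dist_le eps_le1.
have := sqnormD_le (xt t - xbar) xbar; have := sqnormD_le (lt t - lbar) lbar.
have := ler_norm K; have := normr_ge0 K; have := sqr_ge0 (eps t).
by move: dist_le; rewrite /prod_sqnorm !subrK; nra.
Qed.

Lemma path_increment_bound : exists k, \forall t \near +oo, \forall h \near 0,
  prod_sqnorm (xt (h + t) - xt t) (lt (h + t) - lt t) <= k * (eps (h + t) - eps t) ^+ 2.
Proof.
have [B bounded] := path_bounded.
exists (4 * B / alpha).
have good : \forall s \near +oo,
    [/\ t0 <= s, 4 * eps s ^+ 2 <= alpha & prod_sqnorm (xt s) (lt s) <= B].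
  by apply: filterS2 eps_small bounded => s [].
apply: filterS2 good (near_pinfty_shift good) => t [t0t _ Bt].
apply: filterS => h [t0h eps_h _].
have := regularized_zero_dist T_expansive alpha_gt0 eps_h (path_zero t0h) (path_zero t0t).
move=> /le_trans; apply.
by rewrite ler_wpM2r ?sqr_ge0 // ler_pM2r ?invr_gt0 // ler_pM2l.
Qed.

Hypothesis eps_derivable : forall t, t0 < t -> derivable eps t 1.

Lemma path_derive_bound : exists k, \forall t \near +oo,
  derivable xt t 1 -> derivable lt t 1 ->
  prod_sqnorm (derive1 xt t) (derive1 lt t) <= k * derive1 eps t ^+ 2.
Proof.
have [k incr] := path_increment_bound.
exists k; apply: filterS2 incr (nbhs_pinfty_gt (num_real t0)) => t incr_t t0t dx dl.
exact: derive1_prod_sqnorm_le dx dl (eps_derivable t0t) (nbhs_dnbhs incr_t).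
Qed.

End RegularizedPath.

Theorem lemma2p7 (R : realType) (X Y : completeNormedModType R)
  (ipX : inner_product X) (ipY : inner_product Y)
  (f : X -> R) (gradf : X -> X) (A : {linear X -> Y}) (Astar : Y -> X) (b : Y)
  (t0 : R) (eps : R -> R) (xt : R -> X) (lt : R -> Y) (alpha : R)
  (xbar : X) (lbar : Y) :
  convex_fun f ->
  is_gradient ipX f gradf -> continuous gradf ->
  continuous A ->
  is_adjoint ipX ipY A Astar ->
  (exists x l, opt_sol f A b x /\ multipliers f gradf A Astar b l) ->
  (forall t, t0 <= t -> 0 < eps t) ->
  (forall t, t0 < t -> derivable eps t 1) ->
  {in `]t0, +oo[, continuous (derive1 eps)} ->
  eps @ +oo --> 0 ->
  (forall t, t0 <= t ->
     saddle_point (reg_lagrangian ipY f A b (eps t)) (xt t) (lt t)) ->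
  0 < alpha ->
  (forall (x xi : X) (l eta : Y),
     prod_sqnorm ((gradf x + Astar l) - (gradf xi + Astar eta))
                 ((b - A x) - (b - A xi))
       >= alpha * prod_sqnorm (x - xi) (l - eta)) ->
  opt_sol f A b xbar -> multipliers f gradf A Astar b lbar ->
  (exists C T1, forall t, T1 <= t ->
     prod_sqnorm (xt t) (lt t) <= C / (alpha + eps t ^+ 2)) /\
  (exists C T1, forall t, T1 <= t ->
     prod_sqnorm (xt t - xbar) (lt t - lbar)
       <= C * (eps t ^+ 2 / (alpha + eps t ^+ 2))) /\
  (exists C T1, forall t, T1 <= t ->
     derivable xt t 1 -> derivable lt t 1 ->
     prod_sqnorm (derive1 xt t) (derive1 lt t)
       <= C * (`|derive1 eps t| ^+ 2 / (alpha + eps t ^+ 2) ^+ 2)).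
Proof.
move=> _ f_grad _ _ A_adj _ eps_gt0 eps_der _ eps_cvg0 saddle alpha_gt0 T_exp.
move=> xbar_opt lbar_mult.
have path_zero t : t0 <= t -> regularized_zero gradf A Astar b (eps t) (xt t) (lt t).
  move=> t0t.
  by apply: (saddle_point_regularized_zero f_grad A_adj (eps_gt0 t t0t) (saddle t t0t)).
have bar_zero := opt_sol_regularized_zero xbar_opt lbar_mult.
have [B bounded] := path_bounded T_exp alpha_gt0 path_zero bar_zero eps_cvg0.
have [K dist_bar] := path_dist_bar T_exp alpha_gt0 path_zero bar_zero eps_cvg0.
have [k der_bound] := path_derive_bound T_exp alpha_gt0 path_zero bar_zero eps_cvg0 eps_der.
have eps_le1 := cvg0_sqr_le eps_cvg0 ltr01.
have denom_gt0 t : 0 < alpha + eps t ^+ 2 by rewrite ltr_wpDr ?sqr_ge0.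
have denom_le t : eps t ^+ 2 <= 1 -> alpha + eps t ^+ 2 <= alpha + 1 by rewrite lerD2l.
split; [|split].
- exists (B * (alpha + 1)); apply: near_pinfty_ex_ge.
  apply: filterS2 bounded eps_le1 => t P_le eps_t.
  exact: ler_scale_ratio (prod_sqnorm_ge0 _ _) P_le (denom_gt0 t) (denom_le t eps_t).
- exists (K * (alpha + 1)); apply: near_pinfty_ex_ge.
  apply: filterS2 dist_bar eps_le1 => t P_le eps_t; rewrite mulrA (mulrAC K).
  exact: ler_scale_ratio (prod_sqnorm_ge0 _ _) P_le (denom_gt0 t) (denom_le t eps_t).
- exists (k * (alpha + 1) ^+ 2); apply: near_pinfty_ex_ge.
  apply: filterS2 der_bound eps_le1 => t P_le eps_t dx dl.
  rewrite real_normK ?num_real // mulrA (mulrAC k).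
  apply: ler_scale_ratio (prod_sqnorm_ge0 _ _) (P_le dx dl) _ _.
    by rewrite exprn_gt0.
  have alpha1_ge0 : 0 <= alpha + 1 by rewrite addr_ge0 ?ltW.
  by rewrite lerXn2r ?nnegrE ?denom_le ?(ltW (denom_gt0 t)).
Qed.
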